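(* Let $C=\{c_1,\dots,c_N\}\subset\mathbb{R}^d$ be an arbitrary finite set of centers and $P\subset\mathbb{R}^d$ an arbitrary finite nonempty set with $\mathrm{cost}(P,C)>0$. Pick a random point $c\in P$ with $\Pr(c=x)=\mathrm{cost}(x,C)/\mathrm{cost}(P,C)$ for $x\in P$, and let $C'=C\cup\{c\}$. Then $\mathbb{E}_c[\mathrm{cost}(P,C')]\le 5\,\mathrm{OPT}_1(P)$.
   Context: For a finite set $C\subset\mathbb{R}^d$ and a point $x$, $\mathrm{cost}(x,C)=\min_{c\in C}\|x-c\|^2$; for a finite set $\mathbf{Y}$, $\mathrm{cost}(\mathbf{Y},C)=\sum_{x\in\mathbf{Y}}\mathrm{cost}(x,C)$; $\mathrm{OPT}_1(\mathbf{Y})=\min_{z\in\mathbb{R}^d}\mathrm{cost}(\mathbf{Y},\{z\})$. *)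

From HB Require Import structures.
From mathcomp Require Import all_boot all_order all_algebra.
From mathcomp Require Import boolp classical_sets reals.
Set Implicit Arguments. Unset Strict Implicit. Unset Printing Implicit Defensive.
Import Order.TTheory GRing.Theory Num.Theory.
Local Open Scope ring_scope.
Local Open Scope classical_set_scope.

Section Defs.
Variables (R : realType) (d : nat).
Notation pt := 'rV[R]_d.

Definition sqdist (x y : pt) : R := \sum_(i < d) ((x - y) 0 i) ^+ 2.

(* cost(x, C) = min_{c in C} ||x - c||^2, for a nonempty finite set C
   (given as a sequence; for empty C the value is meaningless). *)
Definition cost_pt (x : pt) (C : seq pt) : R :=
  \big[Num.min/ sqdist x (head x C)]_(c <- C) sqdist x c.

Definition cost (Y C : seq pt) : R := \sum_(x <- Y) cost_pt x C.

Definition OPT1 (Y : seq pt) : R := inf [set cost Y [:: z] | z in [set: pt]].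

Definition expected_cost_after_D2 (P C : seq pt) : R :=
  \sum_(x <- P) (cost_pt x C / cost P C) * cost P (x :: C).
End Defs.

From HB Require Import structures.
From mathcomp Require Import all_boot all_order all_algebra.
From mathcomp Require Import boolp classical_sets reals.
From mathcomp Require Import ring lra.
Import Order.TTheory GRing.Theory Num.Theory.
Local Open Scope ring_scope.

Set Implicit Arguments.
Unset Strict Implicit.

(* The D^2-sampling bound of k-means++ for a single cluster P.
   Write n = |P|, S = cost(P,C), w_c = cost(c,C), K_c = cost(P, C u {c}),
   A_c = sum_{x in P} ||x - c||^2 and Q = sum_{c in P} A_c, so that the
   expected cost is E = (sum_c w_c K_c) / S.  Three geometric facts:
   (1) K_c <= S and K_c <= A_c, since adding a center only lowers costs;
   (2) n w_c <= 2 S + 2 A_c, by summing over x in P the relaxed triangle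
       inequality cost(c,C) <= 2 cost(x,C) + 2 ||x - c||^2;
   (3) t := Q / (2n) is at most every A_c and every cost(P,{z}), because
       coordinatewise sum_{c,x} (x_i - c_i)^2 <= 2n sum_x (x_i - z_i)^2.
   An elementary real inequality turns (1)-(3) into
   n w_c (K_c - t) <= 4 S (A_c - t) for every c in P; summing over c gives
   n sum_c w_c K_c <= (5/2) Q S, i.e. E <= 5 t <= 5 OPT_1(P). *)

Lemma sumr_const_seq (R : nzRingType) (T : Type) (s : seq T) (a : R) :
  \sum_(x <- s) a = (size s)%:R * a.
Proof. by rewrite big_const_seq count_predT iter_addr_0 mulr_natl. Qed.

Section BigMin.
Variables (R : realDomainType) (T : eqType) (F : T -> R).

Lemma bigmin_le_term (i : R) (s : seq T) (k : T) :
  k \in s -> \big[Num.min/i]_(c <- s) F c <= F k.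
Proof.
elim: s => [|a s IH] //; rewrite inE big_cons => /orP [/eqP ->|ks].
  by rewrite ge_min lexx.
by rewrite ge_min (IH ks) orbT.
Qed.

Lemma bigmin_attained (i : R) (s : seq T) :
  \big[Num.min/i]_(c <- s) F c = i \/
  exists2 k, k \in s & \big[Num.min/i]_(c <- s) F c = F k.
Proof.
elim: s => [|a s IH]; first by left; rewrite big_nil.
rewrite big_cons; case: (leP (F a) (\big[Num.min/i]_(c <- s) F c)) => h.
  by right; exists a; rewrite ?mem_head.
case: IH => [->|[k ks ->]]; first by left.
by right; exists k; rewrite // inE ks orbT.
Qed.

End BigMin.

(* The pairwise-spread inequality on the line: for any values f x on a
   sequence s of length n, sum_{c,x} (f x - f c)^2 <= 2 n sum_x (f x)^2
   (the exact value is 2 n sum (f x)^2 - 2 (sum f x)^2). *)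
Lemma pairwise_sq_sum_le (R : realDomainType) (T : Type) (s : seq T)
    (f : T -> R) :
  \sum_(c <- s) \sum_(x <- s) (f x - f c) ^+ 2 <=
  2 * (size s)%:R * \sum_(x <- s) f x ^+ 2.
Proof.
set n : R := (size s)%:R; set A := \sum_(x <- s) f x ^+ 2.
set B := \sum_(x <- s) f x.
have row c : \sum_(x <- s) (f x - f c) ^+ 2 = A - 2 * f c * B + n * f c ^+ 2.
  rewrite (eq_bigr (fun x => f x ^+ 2 - 2 * f c * f x + f c ^+ 2)); last first.
    by move=> x _; ring.
  by rewrite !big_split /= sumrN -mulr_sumr sumr_const_seq.
under eq_bigr => c _ do rewrite row.
rewrite !big_split /= sumrN sumr_const_seq -mulr_suml -mulr_sumr -mulr_sumr -/B -/A -/n.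
have : 0 <= B ^+ 2 by rewrite sqr_ge0.
nra.
Qed.

(* Bound K by the smaller of S and A, then n w by 2 S + 2 A. *)
Lemma five_step (R : realDomainType) (n w K S A t : R) :
  0 < n -> 0 <= w -> 0 <= t -> t <= A -> 0 <= S ->
  K <= S -> K <= A -> n * w <= 2 * S + 2 * A ->
  n * w * (K - t) <= 4 * S * (A - t).
Proof.
move=> n0 w0 t0 tA S0 KS KA hw.
have nw0 : 0 <= n * w by rewrite mulr_ge0 // ltW.
case: (leP A S) => AS.
  apply: (@le_trans _ _ (n * w * (A - t))); first by rewrite ler_wpM2l // lerD2r.
  apply: (@le_trans _ _ ((2 * S + 2 * A) * (A - t))); last by nra.
  by rewrite ler_wpM2r // subr_ge0.
apply: (@le_trans _ _ (n * w * (S - t))); first by rewrite ler_wpM2l // lerD2r.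
case: (leP S t) => St.
  have : n * w * (S - t) <= 0 by rewrite mulr_ge0_le0 // subr_le0.
  have : 0 <= 4 * S * (A - t) by rewrite !mulr_ge0 // subr_ge0.
  lra.
apply: (@le_trans _ _ ((2 * S + 2 * A) * (S - t))); last by nra.
by rewrite ler_wpM2r // subr_ge0 ltW.
Qed.

Section KMeans.
Variables (R : realType) (d : nat).
Notation pt := 'rV[R]_d.
Implicit Types (x y z c k : pt) (C P : seq pt).

Definition sqdist_sum P c : R := \sum_(x <- P) sqdist x c.

Lemma sqdist_ge0 x y : 0 <= sqdist x y.
Proof. by apply: sumr_ge0 => i _; rewrite sqr_ge0. Qed.

(* Relaxed triangle inequality ||c - k||^2 <= 2 ||x - k||^2 + 2 ||x - c||^2;
   coordinatewise (u - v)^2 <= 2 u^2 + 2 v^2, the difference being (u + v)^2. *)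
Lemma sqdist_relaxed_triangle x c k :
  sqdist c k <= 2 * sqdist x k + 2 * sqdist x c.
Proof.
rewrite /sqdist !mulr_sumr -big_split /=; apply: ler_sum => i _.
rewrite !mxE; set a := x 0 i; set b := c 0 i; set e := k 0 i.
have : 0 <= (a - b + (a - e)) ^+ 2 by rewrite sqr_ge0.
nra.
Qed.

Lemma cost_pt_le_center x k C : k \in C -> cost_pt x C <= sqdist x k.
Proof. exact: bigmin_le_term. Qed.

Lemma cost_pt_attained x C : (0 < size C)%N ->
  exists2 k, k \in C & cost_pt x C = sqdist x k.
Proof.
case: C => [|a C] // _; rewrite /cost_pt /=.
case: (bigmin_attained (sqdist x) (sqdist x a) (a :: C)) => [->|//].
by exists a; rewrite ?mem_head.
Qed.

Lemma cost_pt_ge0 x C : (0 < size C)%N -> 0 <= cost_pt x C.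
Proof. by move=> /(cost_pt_attained x) [k _ ->]; apply: sqdist_ge0. Qed.

(* cost(c, C) <= 2 cost(x, C) + 2 ||x - c||^2, via x's nearest center. *)
Lemma cost_pt_relaxed_triangle x c C : (0 < size C)%N ->
  cost_pt c C <= 2 * cost_pt x C + 2 * sqdist x c.
Proof.
move=> /(cost_pt_attained x) [k kC ->].
exact: le_trans (cost_pt_le_center c kC) (sqdist_relaxed_triangle x c k).
Qed.

Lemma cost_cons_le P c C : (0 < size C)%N ->
  cost P (c :: C) <= cost P C /\ cost P (c :: C) <= sqdist_sum P c.
Proof.
move=> C0; split; apply: ler_sum => x _; last first.
  by apply: cost_pt_le_center; rewrite mem_head.
have [k kC ->] := cost_pt_attained x C0.
by apply: cost_pt_le_center; rewrite inE kC orbT.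
Qed.

Lemma weight_bound P c C : (0 < size C)%N ->
  (size P)%:R * cost_pt c C <= 2 * cost P C + 2 * sqdist_sum P c.
Proof.
move=> C0; rewrite -sumr_const_seq /cost /sqdist_sum !mulr_sumr -big_split.
by apply: ler_sum => x _; apply: cost_pt_relaxed_triangle.
Qed.

(* Fact (3): the total pairwise spread Q = sum_c A_c of P is at most
   2 |P| times the 1-means cost of P for any center z (coordinatewise
   pairwise_sq_sum_le, with values shifted by z). *)
Lemma pairwise_spread_le P z :
  \sum_(c <- P) sqdist_sum P c <= 2 * (size P)%:R * sqdist_sum P z.
Proof.
rewrite /sqdist_sum /sqdist.
under eq_bigr => c _ do rewrite exchange_big /=.
rewrite exchange_big /= [X in _ <= _ * X]exchange_big /= mulr_sumr.
apply: ler_sum => i _.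
have shift x c : (x - c) 0 i = (x 0 i - z 0 i) - (c 0 i - z 0 i).
  by rewrite !mxE; ring.
under eq_bigr => c _ do under eq_bigr => x _ do rewrite shift.
under [X in _ <= _ * X]eq_bigr => x _ do rewrite !mxE.
exact: (pairwise_sq_sum_le P (fun y => y 0 i - z 0 i)).
Qed.

Lemma cost_single P z : cost P [:: z] = sqdist_sum P z.
Proof. by apply: eq_bigr => x _; rewrite /cost_pt /= big_cons big_nil minxx. Qed.

Lemma spread_le_OPT1 P : (0 < size P)%N ->
  (\sum_(c <- P) sqdist_sum P c) / (2 * (size P)%:R) <= OPT1 P.
Proof.
move=> P0; apply: lb_le_inf; first by exists (cost P [:: 0]); exists 0.
move=> _ [z _ <-]; rewrite cost_single ler_pdivrMr ?mulr_gt0 ?ltr0n // mulrC.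
exact: pairwise_spread_le.
Qed.

(* Summing five_step over c in P, with t = Q / (2n):
   n sum_c w_c K_c <= (5/2) Q S. *)
Lemma weighted_cost_bound P C : (0 < size C)%N -> (0 < size P)%N ->
  0 < cost P C ->
  (size P)%:R * \sum_(c <- P) cost_pt c C * cost P (c :: C) <=
  5 / 2 * (\sum_(c <- P) sqdist_sum P c) * cost P C.
Proof.
move=> C0 P0 S0; set Q := \sum_(c <- P) sqdist_sum P c.
set n : R := (size P)%:R; set S := cost P C.
set t := Q / (2 * n); set WK := \sum_(c <- P) cost_pt c C * cost P (c :: C).
have n0 : 0 < n by rewrite ltr0n.
have Q0 : 0 <= Q by do 2!apply: sumr_ge0 => ? _; apply: sqdist_ge0.
have t0 : 0 <= t by rewrite divr_ge0 // mulr_ge0 // ltW.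
have nt : n * t = Q / 2 by rewrite /t; field; apply/eqP; lra.
have local c : n * cost_pt c C * (cost P (c :: C) - t) <=
               4 * S * (sqdist_sum P c - t).
  have [KS KA] := cost_cons_le P c C0.
  apply: five_step (weight_bound P c C0) => //; last exact: ltW.
    exact: cost_pt_ge0.
  by rewrite /t ler_pdivrMr ?mulr_gt0 // mulrC pairwise_spread_le.
have eL : \sum_(c <- P) n * cost_pt c C * (cost P (c :: C) - t) =
          n * WK - n * t * S.
  rewrite (eq_bigr (fun c => n * (cost_pt c C * cost P (c :: C)) -
                             n * t * cost_pt c C)); last by move=> c _; ring.
  by rewrite big_split /= sumrN -!mulr_sumr.
have eR : \sum_(c <- P) 4 * S * (sqdist_sum P c - t) =
          4 * S * Q - 4 * S * (n * t).
  under eq_bigr => c _ do rewrite mulrBr.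
  by rewrite big_split /= sumrN -mulr_sumr sumr_const_seq mulrCA.
have summed : n * WK - n * t * S <= 4 * S * Q - 4 * S * (n * t).
  by rewrite -eL -eR; apply: ler_sum => c _; apply: local.
by move: summed; rewrite nt; lra.
Qed.

Lemma expected_cost_le_spread P C : (0 < size C)%N -> (0 < size P)%N ->
  0 < cost P C ->
  expected_cost_after_D2 P C <=
  5 * ((\sum_(c <- P) sqdist_sum P c) / (2 * (size P)%:R)).
Proof.
move=> C0 P0 S0; set n : R := (size P)%:R; set Q := \sum_(c <- P) sqdist_sum P c.
have n0 : 0 < n by rewrite ltr0n.
have expected_eq : expected_cost_after_D2 P C =
    (\sum_(c <- P) cost_pt c C * cost P (c :: C)) / cost P C.
  rewrite /expected_cost_after_D2 mulr_suml.
  by apply: eq_bigr => c _; rewrite mulrAC.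
rewrite expected_eq ler_pdivrMr // -(ler_pM2l n0).
have -> : n * (5 * (Q / (2 * n)) * cost P C) = 5 / 2 * Q * cost P C.
  by field; lra.
exact: weighted_cost_bound.
Qed.

End KMeans.

Unset Implicit Arguments.

Theorem mainTheorem3 (R : realType) (d : nat) (C P : seq 'rV[R]_d) :
  uniq C -> (0 < size C)%N ->
  uniq P -> (0 < size P)%N ->
  0 < cost P C ->
  expected_cost_after_D2 P C <= 5 * OPT1 P.
Proof.
move=> _ C0 _ P0 S0.
apply: le_trans (expected_cost_le_spread C0 P0 S0) _.
by rewrite ler_pM2l // spread_le_OPT1.
Qed.
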